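(* Let $R_1, Q_1,\dots,Q_s\in\mathbb{P}^1$ with $Q_1,\dots,Q_s$ distinct, let $P_{1j}=R_1\times Q_j$, and let $Z=\{(P_{11};m_{11}),\dots,(P_{1s};m_{1s})\}$ be a fat point scheme (so its support lies on the line defined by a form of degree $(1,0)$). Let $m=\max_j m_{1j}$ and for $h=0,\dots,m-1$ put $a_h=\sum_{j=1}^s (m_{1j}-h)_+$, where $(n)_+=\max\{0,n\}$. Then for all $(i,j)\in\mathbb{N}^2$, $$H_Z(i,j)=\sum_{h=0}^{\min\{i,\,m-1\}}\min\{j+1,\,a_h\}.$$ (Equivalently, written as a matrix with rows indexed by $i$ and columns by $j$, $H_Z$ is the sum over $h=0,\dots,m-1$ of the matrix that is zero in rows $0,\dots,h-1$ and whose every row $i\ge h$ is $(1,2,\dots,a_h-1,a_h,a_h,\dots)$.)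
   Context: $\mathbf{k}$ is algebraically closed, $R=\mathbf{k}[x_0,x_1,y_0,y_1]$ bigraded with $\deg x_i=(1,0)$, $\deg y_i=(0,1)$. A point $P=[a_0:a_1]\times[b_0:b_1]$ has ideal $\wp_P=(a_1x_0-a_0x_1,b_1y_0-b_0y_1)$; a fat point scheme $Z=\{(P_1;m_1),\dots,(P_s;m_s)\}$ (distinct points, positive integers $m_i$) has ideal $I_Z=\bigcap\wp_{P_i}^{m_i}$ and Hilbert function $H_Z(i,j)=\dim_{\mathbf{k}}(R/I_Z)_{(i,j)}$. *)

From HB Require Import structures.
From mathcomp Require Import all_boot all_algebra.
From mathcomp Require Import mpoly.
Set Implicit Arguments. Unset Strict Implicit. Unset Printing Implicit Defensive.
Import GRing.Theory.
Local Open Scope ring_scope.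

(* R = k[x0,x1,y0,y1] encoded as {mpoly k[4]}: variables 0,1 = x0,x1 ; 2,3 = y0,y1 *)
Section Defs.
Variable k : closedFieldType.

Definition vx0 : {mpoly k[4]} := 'X_(@Ordinal 4 0 isT).
Definition vx1 : {mpoly k[4]} := 'X_(@Ordinal 4 1 isT).
Definition vy0 : {mpoly k[4]} := 'X_(@Ordinal 4 2 isT).
Definition vy1 : {mpoly k[4]} := 'X_(@Ordinal 4 3 isT).

Definition bihomog (i j : nat) (f : {mpoly k[4]}) : bool :=
  all (fun mo : 'X_{1..4} =>
         (mo (@Ordinal 4 0 isT) + mo (@Ordinal 4 1 isT) == i)%N &&
         (mo (@Ordinal 4 2 isT) + mo (@Ordinal 4 3 isT) == j)%N) (msupp f).

(* Generators of the ideal of the point P = [a0:a1] x [b0:b1] *)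
Definition ptL1 (a0 a1 : k) : {mpoly k[4]} := a1 *: vx0 - a0 *: vx1.
Definition ptL2 (b0 b1 : k) : {mpoly k[4]} := b1 *: vy0 - b0 *: vy1.

(* f \in (wp_P)^m, wp_P = (L1, L2): (L1,L2)^m is generated by L1^t L2^(m-t), t = 0..m *)
Definition in_pt_ideal_pow (a0 a1 b0 b1 : k) (m : nat) (f : {mpoly k[4]}) : Prop :=
  exists g : 'I_m.+1 -> {mpoly k[4]},
    f = \sum_(t < m.+1) g t * (ptL1 a0 a1) ^+ t * (ptL2 b0 b1) ^+ (m - t).

Definition lin_indep_mod (I : {mpoly k[4]} -> Prop) (n : nat)
    (f : 'I_n -> {mpoly k[4]}) : Prop :=
  forall c : 'I_n -> k, I (\sum_(l < n) c l *: f l) -> forall l, c l = 0.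

Definition quot_dim_is (I : {mpoly k[4]} -> Prop) (i j n : nat) : Prop :=
  (exists f : 'I_n -> {mpoly k[4]}, (forall l, bihomog i j (f l)) /\ lin_indep_mod I f) /\
  (forall f : 'I_n.+1 -> {mpoly k[4]}, (forall l, bihomog i j (f l)) -> ~ lin_indep_mod I f).

Definition P1pt (a0 a1 : k) : bool := (a0 != 0) || (a1 != 0).
Definition P1distinct (a0 a1 b0 b1 : k) : bool := a0 * b1 - a1 * b0 != 0.

Definition fat_ideal (s : nat) (r0 r1 : k) (q0 q1 : 'I_s -> k) (m : 'I_s -> nat)
    (f : {mpoly k[4]}) : Prop :=
  forall t : 'I_s, in_pt_ideal_pow r0 r1 (q0 t) (q1 t) (m t) f.

Definition hilb_is (s : nat) (r0 r1 : k) (q0 q1 : 'I_s -> k) (m : 'I_s -> nat)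
    (i j n : nat) : Prop := quot_dim_is (fat_ideal r0 r1 q0 q1 m) i j n.

End Defs.

From HB Require Import structures.
From mathcomp Require Import all_boot all_algebra.
From mathcomp Require Import mpoly.
From mathcomp Require Import ring.
Set Implicit Arguments. Unset Strict Implicit. Unset Printing Implicit Defensive.
Import GRing.Theory.
Local Open Scope ring_scope.

(* Change coordinates: u0 = 0 is the line through the support, u0, u1 span
   the (1,0)-forms, and y0, v1 span the (0,1)-forms with v1 nonvanishing at
   every Q_t, so that the ideal of Q_t is generated by y0 - rho_t v1.  The
   monomials u0^h u1^(i-h) y0^l v1^(j-l) span R_(i,j).
   Dehomogenising (u1 = v1 = 1) turns f into sum_h X^h F_h(Y), and every f of
   I_Z has F_h divisible by P_h = prod_t (Y - rho_t)^(m_t - h)_+, a polynomial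
   of degree a_h.  Conversely f is congruent modulo I_Z to the form obtained
   by replacing each F_h by its remainder modulo P_h.  So the coefficients of
   these remainders, for h <= i and degree <= j, are coordinates on
   (R/I_Z)_(i,j), and there are sum_h min(j+1, a_h) of them. *)

Section Bihomogeneous.
Variable k : closedFieldType.
Implicit Types p q : {mpoly k[4]}.

Lemma bihomog0 i j : bihomog i j (0 : {mpoly k[4]}).
Proof. by rewrite /bihomog msupp0. Qed.

Lemma bihomogD i j p q : bihomog i j p -> bihomog i j q -> bihomog i j (p + q).
Proof.
move=> /allP hp /allP hq; apply/allP => mo /msuppD_le.
by rewrite mem_cat => /orP[/hp|/hq].
Qed.

Lemma bihomogZ i j c p : bihomog i j p -> bihomog i j (c *: p).
Proof. by move=> /allP hp; apply/allP => mo /msuppZ_le /hp. Qed.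

Lemma bihomogB i j p q : bihomog i j p -> bihomog i j q -> bihomog i j (p - q).
Proof. by move=> hp hq; rewrite -scaleN1r; apply/bihomogD/bihomogZ. Qed.

Lemma bihomog_sum i j (I : Type) (r : seq I) (P : pred I) (F : I -> {mpoly k[4]}) :
  (forall x, P x -> bihomog i j (F x)) -> bihomog i j (\sum_(x <- r | P x) F x).
Proof. by move=> hF; apply big_ind => //; [exact: bihomog0 | exact: bihomogD]. Qed.

Lemma bihomogM i j i' j' p q : bihomog i j p -> bihomog i' j' q ->
  bihomog (i + i') (j + j') (p * q).
Proof.
move=> /allP hp /allP hq; apply/allP => mo /msuppM_le /allpairsP [[m1 m2] /= [H1 H2 ->]].
move: (hp _ H1) (hq _ H2) => /andP[/eqP a1 /eqP a2] /andP[/eqP b1 /eqP b2].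
rewrite !mnmDE; apply/andP; split; apply/eqP.
- by rewrite -a1 -b1 addnACA.
- by rewrite -a2 -b2 addnACA.
Qed.

Lemma bihomogX i j n p : bihomog i j p -> bihomog (i * n) (j * n) (p ^+ n).
Proof.
move=> hp; elim: n => [|n IH].
  by rewrite expr0 !muln0 /bihomog -mpolyX0 msuppX /= !mnm0E.
by rewrite exprS !mulnS; apply: bihomogM.
Qed.

Lemma bihomog_x0 : bihomog 1 0 (vx0 k). Proof. by rewrite /bihomog /vx0 msuppX /= !mnm1E. Qed.
Lemma bihomog_x1 : bihomog 1 0 (vx1 k). Proof. by rewrite /bihomog /vx1 msuppX /= !mnm1E. Qed.
Lemma bihomog_y0 : bihomog 0 1 (vy0 k). Proof. by rewrite /bihomog /vy0 msuppX /= !mnm1E. Qed.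
Lemma bihomog_y1 : bihomog 0 1 (vy1 k). Proof. by rewrite /bihomog /vy1 msuppX /= !mnm1E. Qed.

Lemma mpolyX4E (mo : 'X_{1..4}) : 'X_[mo] =
  vx0 k ^+ mo (@Ordinal 4 0 isT) * (vx1 k ^+ mo (@Ordinal 4 1 isT) *
  (vy0 k ^+ mo (@Ordinal 4 2 isT) * (vy1 k ^+ mo (@Ordinal 4 3 isT) * 1))).
Proof.
rewrite mpolyXE_id !big_ord_recl big_ord0 /vx0 /vx1 /vy0 /vy1.
by congr (_ * (_ * (_ * (_ * _)))); congr (mpolyX _ _ ^+ mo _); apply: val_inj.
Qed.

End Bihomogeneous.

Section QuotientDimension.
Variables (k : closedFieldType) (I : {mpoly k[4]} -> Prop) (i j : nat).

Lemma quot_dim_is_dual_basis n (b : 'I_n -> {mpoly k[4]})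
    (coord : {mpoly k[4]} -> 'I_n -> k) :
  (forall l, bihomog i j (b l)) ->
  (forall f g l, coord (f + g) l = coord f l + coord g l) ->
  (forall c f l, coord (c *: f) l = c * coord f l) ->
  (forall f, I f -> forall l, coord f l = 0) ->
  (forall l l', coord (b l) l' = (l == l')%:R) ->
  (forall f, bihomog i j f -> I (f - \sum_l coord f l *: b l)) ->
  quot_dim_is I i j n.
Proof.
move=> hb coordD coordZ coordI coord_b b_span.
have coord0 l : coord 0 l = 0 by rewrite -(scale0r 0) coordZ mul0r.
have coord_sum l n' (c : 'I_n' -> k) (g : 'I_n' -> {mpoly k[4]}) :
    coord (\sum_(x < n') c x *: g x) l = \sum_(x < n') c x * coord (g x) l.
  rewrite (big_morph (coord^~ l) (fun f g => coordD f g l) (coord0 l)).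
  by apply: eq_bigr => x _; rewrite coordZ.
split.
  exists b; split => // c Ic l; have := coordI _ Ic l; rewrite coord_sum.
  rewrite (bigD1 l) //= coord_b eqxx mulr1 big1 ?addr0 // => x hx.
  by rewrite coord_b (negbTE hx) mulr0.
move=> f hf f_indep.
pose A : 'M[k]_(n.+1, n) := \matrix_(l, l') coord (f l) l'.
have K_neq0 : kermx A != 0.
  rewrite kermx_eq0; apply/negP => /row_freeP [X AX].
  have := mxrankM_maxl A X; rewrite AX mxrank1 => /leq_trans /(_ (rank_leq_col A)).
  by rewrite ltnn.
have [[l0 l1] /= hK|K0] := pickP (fun p : 'I_n.+1 * 'I_n.+1 => kermx A p.1 p.2 != 0);
  last first.
  move/eqP: K_neq0; apply; apply/matrixP => x y.
  by move/negbFE/eqP: (K0 (x, y)) => /= ->; rewrite mxE.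
suff Ig : I (\sum_(l < n.+1) kermx A l0 l *: f l).
  by move: hK; rewrite (f_indep _ Ig l1) eqxx.
set g := \sum_(l < n.+1) _.
have := b_span g (bihomog_sum _ (fun l _ => bihomogZ (kermx A l0 l) (hf l))).
rewrite big1 ?subr0 // => l' _; rewrite coord_sum.
have -> : \sum_(l < n.+1) kermx A l0 l * coord (f l) l' = (kermx A *m A) l0 l'.
  by rewrite [RHS]mxE; apply: eq_bigr => l _; rewrite [A _ _]mxE.
by rewrite mulmx_ker mxE scale0r.
Qed.

Lemma quot_dim_is_dual_basis_fin (T : finType) (P : pred T)
    (b : T -> {mpoly k[4]}) (coord : {mpoly k[4]} -> T -> k) :
  (forall x, P x -> bihomog i j (b x)) ->
  (forall f g x, coord (f + g) x = coord f x + coord g x) ->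
  (forall c f x, coord (c *: f) x = c * coord f x) ->
  (forall f, I f -> forall x, coord f x = 0) ->
  (forall x y, P x -> P y -> coord (b x) y = (x == y)%:R) ->
  (forall f, bihomog i j f -> I (f - \sum_(x | P x) coord f x *: b x)) ->
  quot_dim_is I i j #|P|.
Proof.
move=> hb coordD coordZ coordI coord_b b_span.
apply: (@quot_dim_is_dual_basis _ (b \o enum_val) (fun f l => coord f (enum_val l))).
- by move=> l; apply/hb/enum_valP.
- by move=> f g l; apply: coordD.
- by move=> c f l; apply: coordZ.
- by move=> f If l; apply: coordI.
- move=> l l'; rewrite /= coord_b ?(inj_eq enum_val_inj) //; exact: enum_valP.
- move=> f hf; have := b_span f hf.
  by rewrite (eq_bigl (mem P)) // (big_enum_val (A := P) (fun x => coord f x *: b x)).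
Qed.

End QuotientDimension.

Section PointIdeal.
Variables (k : closedFieldType) (a0 a1 b0 b1 : k) (mm : nat).
Implicit Types f g : {mpoly k[4]}.

Lemma in_pt_ideal_pow0 : in_pt_ideal_pow a0 a1 b0 b1 mm 0.
Proof. by exists (fun _ => 0); rewrite big1 // => u _; rewrite !mul0r. Qed.

Lemma in_pt_ideal_powD f g : in_pt_ideal_pow a0 a1 b0 b1 mm f ->
  in_pt_ideal_pow a0 a1 b0 b1 mm g -> in_pt_ideal_pow a0 a1 b0 b1 mm (f + g).
Proof.
move=> [F ->] [G ->]; exists (fun u => F u + G u).
by rewrite -big_split; apply: eq_bigr => u _; rewrite !mulrDl.
Qed.

Lemma in_pt_ideal_powZ c f : in_pt_ideal_pow a0 a1 b0 b1 mm f ->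
  in_pt_ideal_pow a0 a1 b0 b1 mm (c *: f).
Proof.
move=> [F ->]; exists (fun u => c *: F u).
by rewrite scaler_sumr; apply: eq_bigr => u _; rewrite !scalerAl.
Qed.

Lemma in_pt_ideal_pow_mul g u :
  in_pt_ideal_pow a0 a1 b0 b1 mm (g * ptL1 a0 a1 ^+ u * ptL2 b0 b1 ^+ (mm - u)).
Proof.
(* For u > mm the surplus power of [ptL1 a0 a1] goes into the coefficient. *)
pose v := minn u mm; have vE : v = u :> nat \/ (v = mm /\ (mm - u = 0)%N).
  by rewrite /v /minn; case: ltnP => hu; [left | right; split => //; apply/eqP; rewrite subn_eq0].
have hv : (v < mm.+1)%N by rewrite ltnS geq_minr.
exists (fun w => if w == Ordinal hv then g * ptL1 a0 a1 ^+ (u - v) else 0).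
rewrite (bigD1 (Ordinal hv)) //= eqxx big1 => [|w /negbTE ->]; last by rewrite !mul0r.
rewrite addr0 -[_ * ptL1 a0 a1 ^+ v]mulrA -exprD subnK ?geq_minl //.
by case: vE => [-> | [-> ->]]; rewrite ?subnn.
Qed.

End PointIdeal.

Section FatIdeal.
Variables (k : closedFieldType) (s : nat) (r0 r1 : k) (q0 q1 : 'I_s -> k) (m : 'I_s -> nat).
Local Notation I := (fat_ideal r0 r1 q0 q1 m).

Lemma fat_ideal_sum (J : Type) (r : seq J) (P : pred J) (F : J -> {mpoly k[4]}) :
  (forall x, P x -> I (F x)) -> I (\sum_(x <- r | P x) F x).
Proof.
move=> IF; apply big_ind => // [t | f g If Ig t]; first exact: in_pt_ideal_pow0.
exact: in_pt_ideal_powD.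
Qed.

End FatIdeal.

Section FatPointsOnLine.
Variables (k : closedFieldType) (s : nat) (r0 r1 : k) (q0 q1 : 'I_s -> k) (m : 'I_s -> nat).
Variables (e0 e1 z : k).
Hypothesis bezout_e : r1 * e0 - r0 * e1 = 1.
Hypothesis lam_neq0 : forall t, q1 t - q0 t * z != 0.
Hypothesis Q_distinct : forall t u, t != u -> P1distinct (q0 t) (q1 t) (q0 u) (q1 u).

Local Notation x0 := (vx0 k).
Local Notation x1 := (vx1 k).
Local Notation y0 := (vy0 k).
Local Notation y1 := (vy1 k).
Local Notation u0 := (ptL1 r0 r1).
Local Notation L2 t := (ptL2 (q0 t) (q1 t)).
Local Notation I := (fat_ideal r0 r1 q0 q1 m).

Definition u1 : {mpoly k[4]} := e0 *: x1 - e1 *: x0.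
Definition v1 : {mpoly k[4]} := y1 - z *: y0.
Definition lam t := q1 t - q0 t * z.
Definition rho t := q0 t / lam t.

Lemma x0E : x0 = e0 *: u0 + r0 *: u1.
Proof.
have -> : e0 *: u0 + r0 *: u1 = (r1 * e0 - r0 * e1)%:MP * x0.
  by rewrite /ptL1 /u1 -!mul_mpolyC rmorphB !rmorphM /=; move: x0 x1 => X0 X1; ring.
by rewrite bezout_e mul1r.
Qed.

Lemma x1E : x1 = e1 *: u0 + r1 *: u1.
Proof.
have -> : e1 *: u0 + r1 *: u1 = (r1 * e0 - r0 * e1)%:MP * x1.
  by rewrite /ptL1 /u1 -!mul_mpolyC rmorphB !rmorphM /=; move: x0 x1 => X0 X1; ring.
by rewrite bezout_e mul1r.
Qed.

Lemma y1E : y1 = v1 + z *: y0.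
Proof. by rewrite subrK. Qed.

Lemma q0E t : q0 t = rho t * lam t.
Proof. by rewrite /rho divfK ?lam_neq0. Qed.

Lemma L2E t : L2 t = lam t *: (y0 - rho t *: v1).
Proof.
rewrite scalerBr scalerA [lam t * _]mulrC -q0E /ptL2 /v1 /lam.
by rewrite -!mul_mpolyC !rmorphB !rmorphM /=; move: y0 y1 => Y0 Y1; ring.
Qed.

Lemma rho_inj : injective rho.
Proof.
move=> t u rho_tu; apply/eqP; apply: contraT => /Q_distinct; rewrite /P1distinct.
have -> : q0 t * q1 u - q1 t * q0 u = q0 t * lam u - q0 u * lam t.
  by rewrite /lam; ring.
by rewrite (q0E t) (q0E u) rho_tu mulrAC subrr eqxx.
Qed.

(* The dehomogenisation u1 = v1 = 1, as a polynomial in X = u0 whose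
   coefficients are polynomials in Y = y0. *)
Definition dehom_var (o : 'I_4) : {poly {poly k}} :=
  match nat_of_ord o with
  | 0 => r0%:P%:P + e0%:P%:P * 'X
  | 1 => r1%:P%:P + e1%:P%:P * 'X
  | 2 => ('X)%:P
  | _ => (1 + z%:P * 'X)%:P
  end.
Definition dehom (p : {mpoly k[4]}) : {poly {poly k}} := mmap (polyC \o polyC) dehom_var p.

Lemma dehomD p q : dehom (p + q) = dehom p + dehom q. Proof. exact: mmapD. Qed.
Lemma dehomB p q : dehom (p - q) = dehom p - dehom q. Proof. exact: mmapB. Qed.
Lemma dehomZ c p : dehom (c *: p) = c%:P%:P * dehom p. Proof. exact: mmapZ. Qed.
Lemma dehomM p q : dehom (p * q) = dehom p * dehom q. Proof. exact: rmorphM. Qed.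
Lemma dehomX p n : dehom (p ^+ n) = dehom p ^+ n. Proof. exact: rmorphXn. Qed.
Lemma dehom_sum (J : Type) (r : seq J) (P : pred J) (F : J -> {mpoly k[4]}) :
  dehom (\sum_(x <- r | P x) F x) = \sum_(x <- r | P x) dehom (F x).
Proof. exact: raddf_sum. Qed.

Lemma dehom_x0 : dehom x0 = r0%:P%:P + e0%:P%:P * 'X.
Proof. by rewrite /dehom /vx0 mmapX mmap1U. Qed.
Lemma dehom_x1 : dehom x1 = r1%:P%:P + e1%:P%:P * 'X.
Proof. by rewrite /dehom /vx1 mmapX mmap1U. Qed.
Lemma dehom_y0 : dehom y0 = ('X)%:P.
Proof. by rewrite /dehom /vy0 mmapX mmap1U. Qed.
Lemma dehom_y1 : dehom y1 = (1 + z%:P * 'X)%:P.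
Proof. by rewrite /dehom /vy1 mmapX mmap1U. Qed.

Lemma dehom_u0 : dehom u0 = 'X.
Proof.
transitivity ((r1 * e0 - r0 * e1)%:P%:P * 'X); last by rewrite bezout_e mul1r.
rewrite /ptL1 dehomB !dehomZ dehom_x0 dehom_x1.
by rewrite !rmorphB !rmorphM /=; ring.
Qed.

Lemma dehom_u1 : dehom u1 = 1.
Proof.
transitivity ((r1 * e0 - r0 * e1)%:P%:P : {poly {poly k}}); last by rewrite bezout_e.
rewrite /u1 dehomB !dehomZ dehom_x0 dehom_x1.
by rewrite !rmorphB !rmorphM /=; ring.
Qed.

Lemma dehom_v1 : dehom v1 = 1.
Proof.
rewrite /v1 dehomB dehomZ dehom_y0 dehom_y1 -!rmorphM -rmorphB /=.
by congr (_%:P); ring.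
Qed.

Lemma dehom_L2 t : dehom (L2 t) = (lam t *: ('X - (rho t)%:P))%:P.
Proof.
rewrite L2E dehomZ dehomB dehomZ dehom_y0 dehom_v1 mulr1.
by rewrite -rmorphB -rmorphM mul_polyC.
Qed.

Definition uv_monomial ii jj h l : {mpoly k[4]} :=
  u0 ^+ h * u1 ^+ (ii - h) * y0 ^+ l * v1 ^+ (jj - l).

Definition uv_span ii jj (f : {mpoly k[4]}) := exists C : nat -> nat -> k,
  f = \sum_(h < ii.+1) \sum_(l < jj.+1) C h l *: uv_monomial ii jj h l.

Lemma dehom_uv_monomial ii jj h l : dehom (uv_monomial ii jj h l) = 'X^h * ('X^l)%:P.
Proof. by rewrite !dehomM !dehomX dehom_u0 dehom_u1 dehom_y0 dehom_v1 !expr1n !mulr1 rmorphXn. Qed.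

Lemma bihomog_uv_monomial ii jj h l : (h <= ii)%N -> (l <= jj)%N ->
  bihomog ii jj (uv_monomial ii jj h l).
Proof.
move=> hh hl.
have hu0 : bihomog 1 0 u0 by apply: bihomogB; apply: bihomogZ;
  [exact: bihomog_x0 | exact: bihomog_x1].
have hu1 : bihomog 1 0 u1 by apply: bihomogB; apply: bihomogZ;
  [exact: bihomog_x1 | exact: bihomog_x0].
have hv1 : bihomog 0 1 v1 by apply: bihomogB; [|apply: bihomogZ];
  [exact: bihomog_y1 | exact: bihomog_y0].
have := bihomogM (bihomogM (bihomogM (bihomogX h hu0) (bihomogX (ii - h) hu1))
   (bihomogX l (bihomog_y0 k))) (bihomogX (jj - l) hv1).
by rewrite !mul1n !mul0n !addn0 !add0n !subnKC.
Qed.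

Lemma uv_span0 ii jj : uv_span ii jj 0.
Proof.
by exists (fun _ _ => 0); rewrite big1 // => h _; rewrite big1 // => l _; rewrite scale0r.
Qed.

Lemma uv_spanD ii jj f g : uv_span ii jj f -> uv_span ii jj g -> uv_span ii jj (f + g).
Proof.
move=> [C ->] [C' ->]; exists (fun h l => C h l + C' h l).
rewrite -big_split /=; apply: eq_bigr => h _; rewrite -big_split /=.
by apply: eq_bigr => l _; rewrite scalerDl.
Qed.

Lemma uv_spanZ ii jj c f : uv_span ii jj f -> uv_span ii jj (c *: f).
Proof.
move=> [C ->]; exists (fun h l => c * C h l).
rewrite scaler_sumr; apply: eq_bigr => h _; rewrite scaler_sumr.
by apply: eq_bigr => l _; rewrite scalerA.
Qed.

Lemma uv_span_sum ii jj (J : Type) (r : seq J) (P : pred J) (F : J -> {mpoly k[4]}) :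
  (forall x, P x -> uv_span ii jj (F x)) -> uv_span ii jj (\sum_(x <- r | P x) F x).
Proof. by move=> hF; apply big_ind => //; [exact: uv_span0 | exact: uv_spanD]. Qed.

Lemma sum_ord_scale_eq (V : lmodType k) (F : nat -> V) n x : (x < n)%N ->
  \sum_(y < n) ((y : nat) == x)%:R *: F y = F x.
Proof.
move=> hx; transitivity (\sum_(y < n | (y : nat) == x) F y); last by rewrite big_ord1_eq hx.
by rewrite [RHS]big_mkcond; apply: eq_bigr => y _; case: eqP; rewrite ?scale1r ?scale0r.
Qed.

Lemma uv_span_uv_monomial ii jj h l : (h <= ii)%N -> (l <= jj)%N ->
  uv_span ii jj (uv_monomial ii jj h l).
Proof.
move=> hh hl; exists (fun h' l' => ((h' == h) && (l' == l))%:R).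
rewrite -(@sum_ord_scale_eq _ (uv_monomial ii jj ^~ l) ii.+1 h) ?ltnS //.
apply: eq_bigr => h' _.
rewrite -(@sum_ord_scale_eq _ (uv_monomial ii jj h') jj.+1 l) ?ltnS //.
by rewrite scaler_sumr; apply: eq_bigr => l' _; rewrite scalerA -natrM mulnb.
Qed.

Lemma uv_span_mul ii jj ii' jj' g f (sh sl : nat -> nat) :
  (forall h l, (h <= ii)%N -> (l <= jj)%N ->
     g * uv_monomial ii jj h l = uv_monomial ii' jj' (sh h) (sl l)) ->
  (forall h, (h <= ii)%N -> (sh h <= ii')%N) ->
  (forall l, (l <= jj)%N -> (sl l <= jj')%N) ->
  uv_span ii jj f -> uv_span ii' jj' (g * f).
Proof.
move=> g_mono hsh hsl [C ->]; rewrite mulr_sumr; apply: uv_span_sum => h _.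
rewrite mulr_sumr; apply: uv_span_sum => l _; rewrite -scalerAr; apply: uv_spanZ.
have hh : (h <= ii)%N by rewrite -ltnS.
have hl : (l <= jj)%N by rewrite -ltnS.
by rewrite g_mono //; apply: uv_span_uv_monomial; [apply: hsh | apply: hsl].
Qed.

Lemma uv_span_mulu0 ii jj f : uv_span ii jj f -> uv_span ii.+1 jj (u0 * f).
Proof.
by apply: (@uv_span_mul _ _ _ _ _ _ S id) => // h l _ _; rewrite /uv_monomial subSS !mulrA -exprS.
Qed.

Lemma uv_span_mulu1 ii jj f : uv_span ii jj f -> uv_span ii.+1 jj (u1 * f).
Proof.
apply: (@uv_span_mul _ _ _ _ _ _ id id) => // [h l hh _|h /leqW //].
by rewrite /uv_monomial subSn // exprS; move: u0 u1 y0 v1 => A0 A1 A2 A3; ring.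
Qed.

Lemma uv_span_muly0 ii jj f : uv_span ii jj f -> uv_span ii jj.+1 (y0 * f).
Proof.
apply: (@uv_span_mul _ _ _ _ _ _ id S) => // h l _ _.
by rewrite /uv_monomial subSS exprS; move: u0 u1 y0 v1 => A0 A1 A2 A3; ring.
Qed.

Lemma uv_span_mulv1 ii jj f : uv_span ii jj f -> uv_span ii jj.+1 (v1 * f).
Proof.
apply: (@uv_span_mul _ _ _ _ _ _ id id) => // [h l _ hl|l /leqW //].
by rewrite /uv_monomial subSn // exprS; move: u0 u1 y0 v1 => A0 A1 A2 A3; ring.
Qed.

Lemma uv_span_mulx0 ii jj f : uv_span ii jj f -> uv_span ii.+1 jj (x0 * f).
Proof.
move=> hf; rewrite x0E mulrDl -!scalerAl.
by apply: uv_spanD; apply: uv_spanZ; [apply: uv_span_mulu0 | apply: uv_span_mulu1].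
Qed.

Lemma uv_span_mulx1 ii jj f : uv_span ii jj f -> uv_span ii.+1 jj (x1 * f).
Proof.
move=> hf; rewrite x1E mulrDl -!scalerAl.
by apply: uv_spanD; apply: uv_spanZ; [apply: uv_span_mulu0 | apply: uv_span_mulu1].
Qed.

Lemma uv_span_muly1 ii jj f : uv_span ii jj f -> uv_span ii jj.+1 (y1 * f).
Proof.
move=> hf; rewrite y1E mulrDl -!scalerAl.
by apply: uv_spanD; [apply: uv_span_mulv1 | apply/uv_spanZ/uv_span_muly0].
Qed.

Lemma uv_span_mulX g di dj :
  (forall ii jj f, uv_span ii jj f -> uv_span (di + ii) (dj + jj) (g * f)) ->
  forall n ii jj f, uv_span ii jj f -> uv_span (di * n + ii) (dj * n + jj) (g ^+ n * f).
Proof.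
move=> g_span; elim=> [|n IH] ii jj f hf; first by rewrite !muln0 mul1r.
by rewrite exprS -mulrA !mulnS -!addnA; apply/g_span/IH.
Qed.

Lemma bihomog_uv_span ii jj f : bihomog ii jj f -> uv_span ii jj f.
Proof.
move=> /allP hf; rewrite (mpolyE f) big_seq; apply: uv_span_sum => mo.
move=> /hf /andP[/eqP deg_x /eqP deg_y]; apply: uv_spanZ; rewrite mpolyX4E.
have span1 : uv_span 0 0 1.
  by have := @uv_span_uv_monomial 0 0 0 0 (leqnn _) (leqnn _); rewrite /uv_monomial !mulr1.
have := uv_span_mulX (di := 1) (dj := 0) uv_span_mulx0 (mo (@Ordinal 4 0 isT))
  (uv_span_mulX (di := 1) (dj := 0) uv_span_mulx1 (mo (@Ordinal 4 1 isT))
  (uv_span_mulX (di := 0) (dj := 1) uv_span_muly0 (mo (@Ordinal 4 2 isT))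
  (uv_span_mulX (di := 0) (dj := 1) uv_span_muly1 (mo (@Ordinal 4 3 isT)) span1))).
by rewrite !mul1n !mul0n !add0n !addn0 deg_x deg_y.
Qed.

Definition a h := (\sum_(t < s) (m t - h))%N.
Definition fat_poly h : {poly k} := \prod_(t < s) ('X - (rho t)%:P) ^+ (m t - h).

Lemma fat_poly_dvdP h (G : {poly k}) :
  (forall t, ('X - (rho t)%:P) ^+ (m t - h) %| G) -> fat_poly h %| G.
Proof.
move=> dvdG; rewrite /fat_poly; elim: (index_enum _) (index_enum_uniq 'I_s) => [|t r IH].
  by rewrite big_nil dvd1p.
move=> /= /andP[tr ur]; rewrite big_cons Gauss_dvdp ?dvdG ?IH //.
apply: coprimep_expl; rewrite coprimep_sym coprimep_XsubC /root horner_prod.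
rewrite prodf_seq_neq0; apply/allP => u ur' /=; rewrite horner_exp hornerXsubC.
apply: expf_neq0; rewrite subr_eq0; apply: contraNneq tr => /rho_inj ->.
by [].
Qed.

Lemma size_fat_poly h : size (fat_poly h) = (a h).+1.
Proof.
rewrite /fat_poly /a; elim: (index_enum _) => [|t r IH]; first by rewrite !big_nil size_poly1.
rewrite !big_cons size_Mmonic ?IH ?size_exp_XsubC ?addSn ?addnS //.
- by rewrite expf_neq0 // polyXsubC_eq0.
- by apply: monic_prod => u _; apply/monic_exp/monicXsubC.
Qed.

Lemma fat_poly_neq0 h : fat_poly h != 0.
Proof. by rewrite -size_poly_eq0 size_fat_poly. Qed.

Lemma size_modp_fat_poly h (F : {poly k}) : (size (F %% fat_poly h)%R <= a h)%N.
Proof. by have := ltn_modp F (fat_poly h); rewrite fat_poly_neq0 size_fat_poly ltnS. Qed.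

Lemma a_eq0 h : (\max_(t < s) m t <= h)%N -> a h = 0%N.
Proof.
move=> hh; apply/eqP; rewrite sum_nat_eq0; apply/forallP => t; apply/implyP => _.
by rewrite subn_eq0 (leq_trans _ hh) // (leq_bigmax t).
Qed.

Lemma dehom_in_pt_ideal_pow t f h : in_pt_ideal_pow r0 r1 (q0 t) (q1 t) (m t) f ->
  ('X - (rho t)%:P) ^+ (m t - h) %| (dehom f)`_h.
Proof.
case=> g ->; rewrite dehom_sum coef_sum.
apply: (big_ind (fun p => ('X - (rho t)%:P) ^+ (m t - h) %| p)) => [|p q|u _].
- exact: dvdp0.
- exact: dvdp_add.
rewrite !dehomM !dehomX dehom_u0 dehom_L2 -rmorphXn coefMC coefMXn.
case: ifP => hu; first by rewrite mul0r dvdp0.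
apply: dvdp_mull; rewrite exprZn dvdpZr ?expf_neq0 ?lam_neq0 //.
by rewrite dvdp_exp2l // leq_sub2l // leqNgt hu.
Qed.

Lemma fat_poly_dvd_dehom f h : I f -> fat_poly h %| (dehom f)`_h.
Proof. by move=> If; apply: fat_poly_dvdP => t; apply: dehom_in_pt_ideal_pow. Qed.

Definition vhomog d (F : {poly k}) : {mpoly k[4]} :=
  \sum_(l < d.+1) F`_l *: (y0 ^+ l * v1 ^+ (d - l)).

Lemma vhomogZ d c (F : {poly k}) : vhomog d (c *: F) = c *: vhomog d F.
Proof. by rewrite /vhomog scaler_sumr; apply: eq_bigr => l _; rewrite coefZ scalerA. Qed.

Lemma vhomogD d (F G : {poly k}) : vhomog d (F + G) = vhomog d F + vhomog d G.
Proof. by rewrite /vhomog -big_split; apply: eq_bigr => l _; rewrite coefD scalerDl. Qed.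

Lemma vhomogB d (F G : {poly k}) : vhomog d (F - G) = vhomog d F - vhomog d G.
Proof. by rewrite vhomogD -scaleN1r vhomogZ scaleN1r. Qed.

Lemma vhomog0 d : vhomog d 0 = 0.
Proof. by rewrite -(scale0r 0) vhomogZ scale0r. Qed.

Lemma vhomog_mulX d (F : {poly k}) : (size F <= d.+1)%N ->
  vhomog d.+1 ('X * F) = y0 * vhomog d F.
Proof.
move=> hF; rewrite /vhomog big_ord_recl coefXM eqxx scale0r add0r mulr_sumr.
by apply: eq_bigr => l _; rewrite coefXM /= add0n /bump /= add1n subSS -scalerAr exprS mulrA.
Qed.

Lemma vhomogS d (F : {poly k}) : (size F <= d.+1)%N -> vhomog d.+1 F = v1 * vhomog d F.
Proof.
move=> hF; rewrite /vhomog big_ord_recr /= nth_default // scale0r addr0 mulr_sumr.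
apply: eq_bigr => l _; rewrite /= -scalerAr subSn 1?exprS; last by rewrite -ltnS.
by congr (_ *: _); move: y0 v1 => Y0 V1; ring.
Qed.

Lemma vhomog_mulXsubC d (F : {poly k}) c : (size F <= d.+1)%N ->
  vhomog d.+1 (F * ('X - c%:P)) = vhomog d F * (y0 - c *: v1).
Proof.
move=> hF; rewrite mulrBr mulrC [F * _]mulrC mul_polyC vhomogB vhomog_mulX //.
by rewrite vhomogZ vhomogS // -!mul_mpolyC; move: (vhomog d F) y0 v1 => A Y0 V1; ring.
Qed.

Lemma size_mul_expXsubC (F : {poly k}) d c n : (size F <= d.+1)%N ->
  (size (F * ('X - c%:P) ^+ n)%R <= (d + n).+1)%N.
Proof.
move=> hF; apply: leq_trans (size_polyMleq _ _) _.
by rewrite size_exp_XsubC addnS /= -addSn leq_add2r.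
Qed.

Lemma vhomog_mul_expXsubC d (F : {poly k}) c n : (size F <= d.+1)%N ->
  vhomog (d + n) (F * ('X - c%:P) ^+ n) = vhomog d F * (y0 - c *: v1) ^+ n.
Proof.
move=> hF; elim: n => [|n IH]; first by rewrite addn0 !expr0 !mulr1.
by rewrite addnS !exprSr !mulrA vhomog_mulXsubC ?IH ?size_mul_expXsubC.
Qed.

Lemma vhomog_mul_fat_poly d h (F : {poly k}) : (size F <= d.+1)%N ->
  vhomog (d + a h) (F * fat_poly h) =
  vhomog d F * \prod_(t < s) (y0 - rho t *: v1) ^+ (m t - h).
Proof.
rewrite /fat_poly /a; elim: (index_enum _) d F => [|t r IH] d F hF.
  by rewrite !big_nil addn0 !mulr1.
by rewrite !big_cons addnA !mulrA IH ?vhomog_mul_expXsubC ?size_mul_expXsubC.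
Qed.

Lemma sum_coef_uv_monomial ii jj h (F : {poly k}) :
  \sum_(l < jj.+1) F`_l *: uv_monomial ii jj h l = u0 ^+ h * u1 ^+ (ii - h) * vhomog jj F.
Proof.
rewrite /vhomog mulr_sumr; apply: eq_bigr => l _.
by rewrite /uv_monomial -scalerAr !mulrA.
Qed.

Lemma fat_ideal_mul_fat_poly ii jj h (F : {poly k}) : (size F <= jj.+1)%N ->
  I (u0 ^+ h * u1 ^+ (ii - h) * vhomog jj (F %/ fat_poly h * fat_poly h)).
Proof.
move=> hF; set Q := F %/ fat_poly h.
have sizeQ : size Q = (size F - a h)%N by rewrite size_divp ?fat_poly_neq0 // size_fat_poly.
have [ha|ha] := leqP (a h) jj; last first.
  suff -> : Q = 0 by rewrite mul0r vhomog0 mulr0 => t; apply: in_pt_ideal_pow0.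
  by apply/eqP; rewrite -size_poly_eq0 sizeQ subn_eq0 (leq_trans hF).
rewrite -(subnK ha) vhomog_mul_fat_poly; last by rewrite sizeQ -subSn // leq_sub2r.
move=> u; rewrite (bigD1 u) //=.
have -> : y0 - rho u *: v1 = (lam u)^-1 *: L2 u by rewrite L2E scalerA mulVf ?scale1r ?lam_neq0.
set G := vhomog _ Q; set P := \prod_(t | _) _; rewrite exprZn.
have -> : u0 ^+ h * u1 ^+ (ii - h) * (G * ((lam u)^-1 ^+ (m u - h) *: L2 u ^+ (m u - h) * P))
  = (lam u)^-1 ^+ (m u - h) *: (u1 ^+ (ii - h) * G * P * u0 ^+ h * L2 u ^+ (m u - h)).
  rewrite -!mul_mpolyC.
  by move: (u0 ^+ h) (u1 ^+ (ii - h)) G (L2 u ^+ (m u - h)) P => A1 A2 A3 A4 A5; ring.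
exact/in_pt_ideal_powZ/in_pt_ideal_pow_mul.
Qed.

Lemma dehom_sum_uv_monomial ii jj (C : nat -> nat -> k) :
  dehom (\sum_(h < ii.+1) \sum_(l < jj.+1) C h l *: uv_monomial ii jj h l) =
  \poly_(h < ii.+1) \poly_(l < jj.+1) C h l.
Proof.
rewrite dehom_sum poly_def; apply: eq_bigr => h _.
rewrite dehom_sum -mul_polyC poly_def rmorph_sum mulr_suml; apply: eq_bigr => l _.
rewrite dehomZ dehom_uv_monomial -mul_polyC rmorphM /=.
by move: ('X^h) (('X^l)%:P) => Xh Yl; ring.
Qed.

Definition reduced_form ii jj (f : {mpoly k[4]}) : {mpoly k[4]} :=
  \sum_(h < ii.+1) u0 ^+ h * u1 ^+ (ii - h) * vhomog jj ((dehom f)`_h %% fat_poly h).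

Lemma sub_reduced_form_in_fat_ideal ii jj f : bihomog ii jj f -> I (f - reduced_form ii jj f).
Proof.
move=> /bihomog_uv_span [C fE].
pose F h := \poly_(l < jj.+1) C h l.
have dehom_fE h : (h < ii.+1)%N -> (dehom f)`_h = F h.
  by move=> hh; rewrite fE dehom_sum_uv_monomial coef_poly hh.
have {}fE : f = \sum_(h < ii.+1) u0 ^+ h * u1 ^+ (ii - h) * vhomog jj (F h).
  rewrite fE; apply: eq_bigr => h _; rewrite -sum_coef_uv_monomial.
  by apply: eq_bigr => l _; rewrite coef_poly ltn_ord.
rewrite /reduced_form {1}fE -sumrB; apply: fat_ideal_sum => h _.
rewrite dehom_fE // -mulrBr -vhomogB {1}(divp_eq (F h) (fat_poly h)) addrK.
exact/fat_ideal_mul_fat_poly/size_poly.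
Qed.

Definition coord (f : {mpoly k[4]}) (x : nat * nat) : k :=
  ((dehom f)`_x.1 %% fat_poly x.1)`_x.2.

Lemma coordD f g x : coord (f + g) x = coord f x + coord g x.
Proof. by rewrite /coord dehomD coefD modpD coefD. Qed.

Lemma coordZ c f x : coord (c *: f) x = c * coord f x.
Proof. by rewrite /coord dehomZ coefCM mul_polyC modpZl coefZ. Qed.

Lemma coord_fat_ideal f x : I f -> coord f x = 0.
Proof. by move=> If; rewrite /coord modp_eq0 ?coef0 // fat_poly_dvd_dehom. Qed.

Lemma coord_uv_monomial ii jj h l h' l' : (l < a h)%N ->
  coord (uv_monomial ii jj h l) (h', l') = ((h == h') && (l == l'))%:R.
Proof.
move=> hl; rewrite /coord /= dehom_uv_monomial coefXnM.
have [<-|ne] := eqVneq h h'.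
  rewrite ltnn subnn coefC eqxx modp_small ?coefXn 1?eq_sym //.
  by rewrite size_polyXn size_fat_poly ltnS.
suff -> : (if (h' < h)%N then 0 else (('X^l)%:P)`_(h' - h)) = 0 :> {poly k}.
  by rewrite mod0p coef0.
by case: ltnP => // hh; rewrite coefC subn_eq0 leqNgt ltn_neqAle ne hh.
Qed.

Definition hrange i := minn i.+1 (\max_(t < s) m t).

Definition coord_index i j :=
  [pred x : 'I_(hrange i) * 'I_j.+1 | (x.2 < minn j.+1 (a x.1))%N].

Lemma card_coord_index i j : #|coord_index i j| = (\sum_(h < hrange i) minn j.+1 (a h))%N.
Proof.
rewrite -sum1_card (eq_bigl (fun x : 'I_(hrange i) * 'I_j.+1 => xpredT x.1 && (x.2 < minn j.+1 (a x.1))%N)) //.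
rewrite -(pair_big_dep xpredT (fun (h : 'I_(hrange i)) (l : 'I_j.+1) => (l < minn j.+1 (a h))%N) (fun _ _ => 1%N)).
apply: eq_bigr => h _ /=.
by rewrite -(big_ord_widen _ (fun _ => 1%N)) ?geq_minl // sum1_card card_ord.
Qed.

Lemma sum_coord_index i j f :
  \sum_(x | coord_index i j x) coord f (x.1 : nat, x.2 : nat) *: uv_monomial i j x.1 x.2 =
  reduced_form i j f.
Proof.
rewrite (eq_bigl (fun x : 'I_(hrange i) * 'I_j.+1 => xpredT x.1 && (x.2 < minn j.+1 (a x.1))%N)) //.
rewrite -(pair_big_dep xpredT (fun (h : 'I_(hrange i)) (l : 'I_j.+1) => (l < minn j.+1 (a h))%N)
   (fun h l => coord f (h : nat, l : nat) *: uv_monomial i j h l)) /=.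
pose R h := u0 ^+ h * u1 ^+ (i - h) * vhomog j ((dehom f)`_h %% fat_poly h).
transitivity (\sum_(h < hrange i) R h).
  apply: eq_bigr => h _; rewrite /R -sum_coef_uv_monomial big_mkcond.
  apply: eq_bigr => l _ /=; case: ifPn => // hl; rewrite nth_default ?scale0r //.
  by apply: leq_trans (size_modp_fat_poly _ _) _; move: hl; rewrite ltn_min ltn_ord -leqNgt.
rewrite /reduced_form (big_ord_widen _ R (geq_minl _ _)) big_mkcond; apply: eq_bigr => h _.
case: ifPn => // /negbTE hh; move: hh; rewrite ltn_min ltn_ord /= => /negbT; rewrite -leqNgt.
move=> /a_eq0 ah0; have := size_modp_fat_poly h (dehom f)`_h.
by rewrite ah0 leqn0 size_poly_eq0 /R => /eqP ->; rewrite vhomog0 mulr0.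
Qed.

Lemma hilb_is_fat_points_on_line i j :
  hilb_is r0 r1 q0 q1 m i j (\sum_(h < hrange i) minn j.+1 (a h)).
Proof.
rewrite -card_coord_index /hilb_is; apply: (quot_dim_is_dual_basis_fin (P := coord_index i j)
  (b := fun x => uv_monomial i j x.1 x.2) (coord := fun f x => coord f (x.1 : nat, x.2 : nat))).
- move=> [h l] _; apply: bihomog_uv_monomial; rewrite -ltnS //.
  exact: leq_trans (ltn_ord h) (geq_minl _ _).
- by move=> f g x; apply: coordD.
- by move=> c f x; apply: coordZ.
- by move=> f If x; apply: coord_fat_ideal.
- move=> [h l] [h' l'] /= hl _; rewrite coord_uv_monomial ?xpair_eqE //.
  exact: leq_trans hl (geq_minr _ _).
- by move=> f hf; rewrite sum_coord_index; apply: sub_reduced_form_in_fat_ideal.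
Qed.

End FatPointsOnLine.

Lemma P1pt_bezout (k : closedFieldType) (r0 r1 : k) : P1pt r0 r1 ->
  exists e0 e1 : k, r1 * e0 - r0 * e1 = 1.
Proof.
case/orP => hr.
  by exists 0, (- r0^-1); rewrite mulr0 sub0r mulrN opprK divff.
by exists r1^-1, 0; rewrite mulr0 subr0 divff.
Qed.

Lemma exists_off_points (k : closedFieldType) s (q0 q1 : 'I_s -> k) :
  (forall t, P1pt (q0 t) (q1 t)) -> exists z, forall t, q1 t - q0 t * z != 0.
Proof.
move=> hq; pose p := \prod_(t < s) ((q1 t)%:P - q0 t *: 'X : {poly k}).
have factor_neq0 t : (q1 t)%:P - q0 t *: 'X != 0 :> {poly k}.
  apply: contraTneq (hq t) => /polyP e; rewrite /P1pt negb_or !negbK.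
  move: (e 0%N) (e 1%N); rewrite !coefE /= mulr0 mulr1 subr0 sub0r => -> /eqP.
  by rewrite oppr_eq0 => -> /=; rewrite eqxx.
have [z] := closed_nonrootP p (introT (prodf_neq0 _ _) (fun t _ => factor_neq0 t)).
rewrite /root horner_prod prodf_seq_neq0 => /allP hz; exists z => t.
by have := hz t (mem_index_enum t); rewrite !hornerE mulrC.
Qed.

Theorem theorem2p2 (k : closedFieldType) (s : nat) (r0 r1 : k)
    (q0 q1 : 'I_s -> k) (m : 'I_s -> nat) :
  (0 < s)%N ->
  P1pt r0 r1 ->
  (forall t, P1pt (q0 t) (q1 t)) ->
  (forall t u, t != u -> P1distinct (q0 t) (q1 t) (q0 u) (q1 u)) ->
  (forall t, 0 < m t)%N ->
  let M := (\max_(t < s) m t)%N in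
  let a := fun h : nat => (\sum_(t < s) (m t - h))%N in
  forall i j : nat,
    hilb_is r0 r1 q0 q1 m i j (\sum_(h < minn i.+1 M) minn j.+1 (a h))%N.
Proof.
move=> _ hr hq Q_distinct _ M a i j.
have [e0 [e1 bezout_e]] := P1pt_bezout hr.
have [z lam_neq0] := exists_off_points hq.
exact: hilb_is_fat_points_on_line bezout_e lam_neq0 Q_distinct i j.
Qed.
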